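(* Let $G$ be a graph and let $H = K_1 + G$ be the join of a single new node with $G$ (the new node adjacent to every node of $G$). If $H$ is non-graceful, then $G$ is non-supergraceful.
   Context: Graphs are finite, simple. A graceful labeling of a graph with $q$ edges is an injective map $\varphi: V \to \{0,\dots,q\}$ whose induced edge labels $|\varphi(u)-\varphi(v)|$ are pairwise distinct; a graph is graceful if it has one, non-graceful otherwise. For a graph $G$ with $p$ nodes and $q$ edges, a total labeling is a map $\varphi: V(G) \to \{1,\dots,p+q\}$ such that the $p$ node labels $\varphi(u)$ and the $q$ edge labels $|\varphi(u)-\varphi(v)|$, $uv \in E(G)$, are all pairwise distinct, so that together they form exactly $\{1,\dots,p+q\}$. $G$ is supergraceful if it admits a total labeling, and non-supergraceful otherwise. *)

From mathcomp Require Import all_boot.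
Set Implicit Arguments. Unset Strict Implicit. Unset Printing Implicit Defensive.

Definition simple_graph (T : finType) (e : rel T) : Prop :=
  symmetric e /\ irreflexive e.

Definition edges (T : finType) (e : rel T) : {set {set T}} :=
  [set [set u; v] | u in T, v in T & e u v].

Definition absdiff (a b : nat) : nat := maxn a b - minn a b.

Definition edge_labels_distinct (T : finType) (e : rel T) (phi : T -> nat) : Prop :=
  forall u v x y, e u v -> e x y ->
    absdiff (phi u) (phi v) = absdiff (phi x) (phi y) ->
    [set u; v] = [set x; y].

Definition graceful_labeling (T : finType) (e : rel T) (phi : T -> nat) : Prop :=
  injective phi /\ (forall u, phi u <= #|edges e|) /\ edge_labels_distinct e phi.

Definition graceful (T : finType) (e : rel T) : Prop :=
  exists phi : T -> nat, graceful_labeling e phi.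

Definition total_labeling (T : finType) (e : rel T) (phi : T -> nat) : Prop :=
  let N := #|T| + #|edges e| in
  [/\ forall u, 1 <= phi u <= N,
      injective phi,
      edge_labels_distinct e phi,
      (forall u x y, e x y -> phi u <> absdiff (phi x) (phi y)) &
      (forall k, 1 <= k <= N ->
         (exists u, phi u = k) \/ (exists x y, e x y /\ absdiff (phi x) (phi y) = k))].

Definition supergraceful (T : finType) (e : rel T) : Prop :=
  exists phi : T -> nat, total_labeling e phi.

Definition join_K1 (T : finType) (e : rel T) : rel (option T) :=
  fun a b => match a, b with
             | Some x, Some y => e x y
             | None, Some _ => true
             | Some _, None => true
             | None, None => false
             end.

From mathcomp Require Import all_boot.

(* Label the apex of K_1 + G by 0 and keep a total labeling of G on the other
   nodes.  The edge labels of K_1 + G are then the edge labels of G (on the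
   edges of G) and the node labels of G (on the cone edges), which a total
   labeling makes pairwise distinct; and all labels stay below
   p + q = #|edges (K_1 + G)|. *)

Set Implicit Arguments.
Unset Strict Implicit.
Unset Printing Implicit Defensive.

Lemma absdiff0n n : absdiff 0 n = n.
Proof. by rewrite /absdiff max0n min0n subn0. Qed.

Lemma absdiffn0 n : absdiff n 0 = n.
Proof. by rewrite /absdiff maxn0 minn0 subn0. Qed.

Lemma imset_Some_set2 (T : finType) (u v : T) :
  Some @: [set u; v] = [set Some u; Some v].
Proof. by rewrite imsetU1 imset_set1. Qed.

Lemma leq_card_edges_join_K1 (T : finType) (e : rel T) :
  #|T| + #|edges e| <= #|edges (join_K1 e)|.
Proof.
set lifted := [set Some @: S | S : {set T} in edges e].
set cone := [set [set None; Some x] | x in T].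
have card_lifted : #|lifted| = #|edges e|.
  by rewrite card_imset //; apply/imset_inj/Some_inj.
have card_cone : #|cone| = #|T|.
  rewrite card_imset // => x y eq_xy.
  have : Some x \in [set None; Some y] by rewrite -eq_xy !inE eqxx orbT.
  by rewrite !inE => /orP[// | /eqP[->]].
have disj : lifted :&: cone = set0.
  apply/setP => S; rewrite !inE.
  apply/negP => /andP[/imsetP[S' _ ->] /imsetP[x _ eqS]].
  have : None \in Some @: S' by rewrite eqS !inE eqxx.
  by case/imsetP.
have sub : lifted :|: cone \subset edges (join_K1 e).
  apply/subsetP => S; rewrite inE.
  case/orP => [/imsetP[S' /imset2P[u v _ euv ->] ->] | /imsetP[x _ ->]].
  - rewrite imset_Some_set2; apply/imset2P; exists (Some u) (Some v) => //.
    by rewrite !inE in euv *.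
  - by apply/imset2P; exists None (Some x); rewrite ?inE.
have := subset_leq_card sub.
by rewrite cardsU disj cards0 subn0 card_lifted card_cone addnC.
Qed.

Section ConeLabel.

Variables (T : finType) (e : rel T) (phi : T -> nat).

Definition cone_label (a : option T) : nat := if a is Some x then phi x else 0.

Lemma cone_label_inj :
  injective phi -> (forall x, 0 < phi x) -> injective cone_label.
Proof.
move=> phi_inj phi_gt0 [x|] [y|] //= eq_xy.
- by rewrite (phi_inj _ _ eq_xy).
- by have := phi_gt0 x; rewrite eq_xy.
- by have := phi_gt0 y; rewrite -eq_xy.
Qed.

Lemma join_K1_edge_label a b : join_K1 e a b ->
  (exists x y, [/\ e x y, [set a; b] = [set Some x; Some y]
     & absdiff (cone_label a) (cone_label b) = absdiff (phi x) (phi y)])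
  \/ (exists x, [set a; b] = [set None; Some x]
     /\ absdiff (cone_label a) (cone_label b) = phi x).
Proof.
case: a b => [x|] [y|] //= exy.
- by left; exists x, y.
- by right; exists x; rewrite absdiffn0 setUC.
- by right; exists y; rewrite absdiff0n.
Qed.

Lemma cone_label_edges_distinct :
  injective phi -> edge_labels_distinct e phi ->
  (forall u x y, e x y -> phi u <> absdiff (phi x) (phi y)) ->
  edge_labels_distinct (join_K1 e) cone_label.
Proof.
move=> phi_inj edges_inj node_edge_diff a b c d eab ecd.
case: (join_K1_edge_label eab) => [[u [v [euv -> ->]]] | [u [-> ->]]];
case: (join_K1_edge_label ecd) => [[x [y [exy -> ->]]] | [x [-> ->]]] eq_lab.
- by rewrite -!imset_Some_set2 (edges_inj _ _ _ _ euv exy eq_lab).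
- by case: (node_edge_diff _ _ _ euv (esym eq_lab)).
- by case: (node_edge_diff _ _ _ exy eq_lab).
- by rewrite (phi_inj _ _ eq_lab).
Qed.

Lemma total_labeling_cone_graceful :
  total_labeling e phi -> graceful_labeling (join_K1 e) cone_label.
Proof.
case=> phi_range phi_inj edges_inj node_edge_diff _.
have phi_gt0 x : 0 < phi x by case/andP: (phi_range x).
split; [exact: cone_label_inj | split].
- case=> [x|] //=; case/andP: (phi_range x) => _ /leq_trans; apply.
  exact: leq_card_edges_join_K1.
- exact: cone_label_edges_distinct.
Qed.

End ConeLabel.

Theorem theorem7p3 (T : finType) (e : rel T) :
  simple_graph e ->
  ~ graceful (join_K1 e) ->
  ~ supergraceful e.
Proof.
move=> _ not_graceful [phi total_phi]; apply: not_graceful.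
by exists (cone_label phi); exact: total_labeling_cone_graceful.
Qed.
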